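(* Let $\|\cdot\|$ be a strictly convex norm on $\mathbb{R}^n$ that is continuously differentiable on $\mathbb{R}^n\setminus\{0\}$, with gradient $N(x)$ at $x\neq0$; set $h(x,y)=\|y\|-\langle y,N(x)\rangle$ for $x\ne0$ and $\sigma(x,t)=\max_{\|y\|\le t}h(x,x+y)$ for $x\ne 0$, $t>0$. Assume $\|\cdot\|$ is geometrically convex with constants $1,\Lambda$, where $\Lambda>2$, i.e. $\Lambda h(x,x+y)\le h(x,x+2y)$ whenever $x\ne 0$ and $\|y\|\le\|x\|$. Let $l_0,l_1,\bar l_0,\bar l_1\in\mathbb{R}^n$ satisfy $$\|l_1-\bar l_0\|\ge\|l_1-l_0\|,\quad \|\bar l_1-l_0\|\ge\|\bar l_1-\bar l_0\|,\quad \|l_1-l_0\|=\|\bar l_1-\bar l_0\|=1,$$ and let $l=[l_0,l_1]$, $\bar l=[\bar l_0,\bar l_1]$ denote the closed segments, $e=l_1-l_0$, $\bar e=\bar l_1-\bar l_0$. Assume $0<\delta<1/4$, $x_0\in\mathbb{R}^n$, and $$l\cap\bar B_\delta(x_0)\ne\emptyset,\qquad \bar l\cap \bar B_\delta(x_0)\neq\emptyset.$$ Assume moreover that $\rho>3\delta$, $l_1,l_0\notin\bar B_\rho(x_0)$, $\kappa\ge \frac{4}{\rho-3\delta}$, and $$\sigma(e,\kappa\delta)\le\sigma(\bar e,\kappa\delta).$$ Then $$h(\bar e,\bar l_1-l_0)+h(\bar e,l_1-\bar l_0)\le \frac{\Lambda}{\Lambda-2}\,\sigma(\bar e,\kapp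a\delta).$$
   Context: $\langle\cdot,\cdot\rangle$ is the Euclidean inner product; $\bar B_s(x_0)=\{x:\|x-x_0\|\le s\}$ is the closed ball in the norm $\|\cdot\|$. Strict convexity of the norm means: if $x,y\neq0$ and $\|x+y\|=\|x\|+\|y\|$, then $y=\alpha x$ for some $\alpha>0$. *)

From HB Require Import structures.
From mathcomp Require Import all_boot all_order all_algebra.
From mathcomp Require Import all_classical all_reals all_analysis.
Set Implicit Arguments. Unset Strict Implicit. Unset Printing Implicit Defensive.
Import Order.TTheory GRing.Theory Num.Theory.
Import numFieldNormedType.Exports.
Local Open Scope classical_set_scope.
Local Open Scope ring_scope.

Section Defs.
Variables (R : realType) (n : nat).
Notation V := 'rV[R]_n.

Definition dotp (u v : V) : R := \sum_(i < n) u ord0 i * v ord0 i.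

Definition is_norm (nrm : V -> R) : Prop :=
  [/\ forall x y, nrm (x + y) <= nrm x + nrm y,
      forall (a : R) x, nrm (a *: x) = `|a| * nrm x &
      forall x, nrm x = 0 -> x = 0].

Definition strictly_convex_norm (nrm : V -> R) : Prop :=
  forall x y, x != 0 -> y != 0 -> nrm (x + y) = nrm x + nrm y ->
    exists2 a : R, 0 < a & y = a *: x.

Definition C1_with_gradient (nrm : V -> R) (N : V -> V) : Prop :=
  (forall x, x != 0 ->
     differentiable nrm x /\ forall v, 'd nrm x v = dotp v (N x)) /\
  {in [set x : V | x != 0], continuous N}.

Definition hfun (nrm : V -> R) (N : V -> V) (x y : V) : R :=
  nrm y - dotp y (N x).

(* sigma(x,t) = max_{||y|| <= t} h(x, x+y)  (the max exists by compactness,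
   so it equals the supremum) *)
Definition sigmafun (nrm : V -> R) (N : V -> V) (x : V) (t : R) : R :=
  sup [set hfun nrm N x (x + y) | y in [set y : V | nrm y <= t]].

Definition geom_convex (nrm : V -> R) (N : V -> V) (Lam : R) : Prop :=
  forall x y, x != 0 -> nrm y <= nrm x ->
    Lam * hfun nrm N x (x + y) <= hfun nrm N x (x + 2 *: y).

Definition seg_meets_ball (nrm : V -> R) (a b c : V) (r : R) : Prop :=
  exists2 t : R, 0 <= t <= 1 & nrm ((1 - t) *: a + t *: b - c) <= r.

End Defs.

From HB Require Import structures.
From mathcomp Require Import all_boot all_order all_algebra.
From mathcomp Require Import all_classical all_reals all_analysis.
From mathcomp Require Import ring lra.
Import Order.TTheory GRing.Theory Num.Theory.
Import numFieldNormedType.Exports.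
Local Open Scope ring_scope.
Set Implicit Arguments. Unset Strict Implicit.

(* Let p = l0 + s e and q = bl0 + t eb be points of the two segments within delta
   of x0 and w = q - p.  Then bl1 - l0 = (1 - t) eb + a and l1 - bl0 = t eb + b with
   a = q - l0, b = l1 - q, and a + b = e.  The excess |a| + |b| - 1 = h(e,a) + h(e,b)
   is controlled by geometric convexity at e: w is short compared with s and 1 - s
   because the endpoints of l are far from x0, so Lam * excess <= sigma(e, kappa delta)
   <= sigma(eb, kappa delta).  In the reverse form
   (Lam - 2) h(u,W) <= Lam (1 + |W| - |u + W|), geometric convexity at eb bounds the
   two h-values by the excess, provided the excess is small compared with t and 1 - t;
   otherwise the crude bound h(eb, e) <= min(2, sigma(eb, kappa delta)) suffices. *)

Ltac row_ring := apply/rowP => i; rewrite !mxE; ring.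

Section Norm.
Variables (R : realType) (n : nat).
Notation V := 'rV[R]_n.

Lemma dotpDl (u v w : V) : dotp (u + v) w = dotp u w + dotp v w.
Proof. by rewrite /dotp -big_split; apply: eq_bigr => i _; rewrite mxE mulrDl. Qed.

Lemma dotpZl (a : R) (u w : V) : dotp (a *: u) w = a * dotp u w.
Proof. by rewrite /dotp mulr_sumr; apply: eq_bigr => i _; rewrite mxE mulrA. Qed.

Lemma dotpNl (u w : V) : dotp (- u) w = - dotp u w.
Proof. by rewrite -scaleN1r dotpZl mulN1r. Qed.

Variable nrm : V -> R.
Hypothesis nrm_norm : is_norm nrm.

Lemma nrmD x y : nrm (x + y) <= nrm x + nrm y.
Proof. by case: nrm_norm. Qed.

Lemma nrmZ a x : 0 <= a -> nrm (a *: x) = a * nrm x.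
Proof. by case: nrm_norm => _ hom _ a0; rewrite hom ger0_norm. Qed.

Lemma nrm0 : nrm 0 = 0.
Proof. by rewrite -(scale0r 0) nrmZ // mul0r. Qed.

Lemma nrmN x : nrm (- x) = nrm x.
Proof. by case: nrm_norm => _ hom _; rewrite -scaleN1r hom normrN normr1 mul1r. Qed.

Lemma nrmB x y : nrm (x - y) <= nrm x + nrm y.
Proof. by rewrite -(nrmN y) nrmD. Qed.

Lemma nrm_ge0 x : 0 <= nrm x.
Proof. by have := nrmD x (- x); rewrite subrr nrm0 nrmN; lra. Qed.

Lemma nrm_gt0 x : x != 0 -> 0 < nrm x.
Proof.
move=> x0; rewrite lt_def nrm_ge0 andbT; apply: contra x0 => /eqP.
by case: nrm_norm => _ _ /[apply] ->.
Qed.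

Lemma nrm1_neq0 u : nrm u = 1 -> u != 0.
Proof.
by move=> u1; apply/eqP => u0; move: u1; rewrite u0 nrm0 => /eqP; rewrite eq_sym oner_eq0.
Qed.

Lemma nrm_gtB rho delta x y :
  rho < nrm (x + y) -> nrm y <= delta -> rho - delta < nrm x.
Proof. by move=> /lt_le_trans/(_ (nrmD x y)); lra. Qed.

Variable N : V -> V.
Hypothesis nrm_C1 : C1_with_gradient nrm N.

(* The gradient of a convex function is a subgradient: compare the difference
   quotients of [nrm] along [v] at [x] with the chord from [x] to [x + v]. *)
Lemma nrm_subgradient x v : x != 0 -> nrm x + dotp v (N x) <= nrm (x + v).
Proof.
move=> x0; case: nrm_C1 => /(_ x x0) [dx dE] _.
have [tri hom _] := nrm_norm.
rewrite -dE -deriveE // -lerBrDl.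
have := @diff_derivable _ _ _ _ _ v dx; rewrite /derive /derivable => dv.
apply: (@cvgr_to_le _ _ _ R _ _ (nrm (x + v) - nrm x) dv).
have := @nbhs_dnbhs_neq R 0; have := @dnbhs0_lt R R 1 ltr01.
move=> small nonzero; near=> h.
have hn0 : h != 0 by near: h.
have hlt : `|h| < 1 by near: h.
rewrite /= [h *: v + x]addrC /GRing.scale /=.
have [hpos|hneg] := ltrP 0 h.
  have e : x + h *: v = (1 - h) *: x + h *: (x + v) by row_ring.
  have h1 : 0 <= 1 - h by move: hlt; rewrite ltr_norml; lra.
  have := tri ((1 - h) *: x) (h *: (x + v)).
  rewrite !hom (ger0_norm h1) (ger0_norm (ltW hpos)) -e => T.
  rewrite ler_pdivrMl //; nra.
have e : (1 - h) *: x = (x + h *: v) + (- h) *: (x + v) by row_ring.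
have := tri (x + h *: v) ((- h) *: (x + v)).
have h1 : 0 <= 1 - h by lra.
have h2 : 0 <= - h by lra.
rewrite -e !hom (ger0_norm h1) (ger0_norm h2) => T.
have hlt0 : h < 0 by rewrite lt_neqAle hn0 hneg.
rewrite ler_ndivrMl //; nra.
Unshelve. all: by end_near.
Qed.

Lemma dotp_self x : x != 0 -> dotp x (N x) = nrm x.
Proof.
move=> x0; apply/eqP; rewrite eq_le; apply/andP; split.
  have := nrm_subgradient x x0.
  by rewrite -mulr2n -scaler_nat nrmZ //; lra.
by have := nrm_subgradient (- x) x0; rewrite subrr nrm0 // dotpNl; lra.
Qed.

Lemma dotp_le_nrm x y : x != 0 -> dotp y (N x) <= nrm y.
Proof.
move=> x0; have := nrm_subgradient (y - x) x0.
by rewrite [x + _]addrC subrK dotpDl dotpNl dotp_self //; lra.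
Qed.

Lemma hfun_ge0 x y : x != 0 -> 0 <= hfun nrm N x y.
Proof. by move=> x0; rewrite /hfun subr_ge0 dotp_le_nrm. Qed.

Lemma hfun_le x y : x != 0 -> hfun nrm N x y <= 2 * nrm y.
Proof.
by move=> x0; have := dotp_le_nrm (- y) x0; rewrite /hfun dotpNl nrmN //; lra.
Qed.

Lemma hfunZ x c y : 0 <= c -> hfun nrm N x (c *: y) = c * hfun nrm N x y.
Proof. by move=> c0; rewrite /hfun nrmZ // dotpZl mulrBr. Qed.

Lemma hfun_self x : x != 0 -> hfun nrm N x x = 0.
Proof. by move=> x0; rewrite /hfun dotp_self // subrr. Qed.

Lemma hfun_convex x a b y z : 0 <= a -> 0 <= b ->
  hfun nrm N x (a *: y + b *: z) <= a * hfun nrm N x y + b * hfun nrm N x z.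
Proof.
move=> a0 b0; rewrite -!hfunZ // /hfun dotpDl.
by have := nrmD (a *: y) (b *: z); lra.
Qed.

Lemma hfun_le_sigma x y tau : x != 0 -> nrm y <= tau ->
  hfun nrm N x (x + y) <= sigmafun nrm N x tau.
Proof.
move=> x0 ytau; apply: ub_le_sup; last by exists y.
exists (2 * (nrm x + tau)) => _ [y' /= y'tau <-].
by have := hfun_le (x + y') x0; have := nrmD x y'; lra.
Qed.

Lemma sigma_ge0 x tau : x != 0 -> 0 <= tau -> 0 <= sigmafun nrm N x tau.
Proof.
move=> x0 tau0; rewrite -(hfun_self x0) -[x in hfun _ _ _ x]addr0.
by apply: hfun_le_sigma; rewrite ?nrm0.
Qed.

Variable Lam : R.
Hypotheses (Lam_gt2 : 2 < Lam) (nrm_geom : geom_convex nrm N Lam).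

(* Geometric convexity applied to y = (W - u) / 2. *)
Lemma hfun_le_triangle_defect (u W : V) : nrm u = 1 -> nrm (W - u) <= 2 ->
  (Lam - 2) * hfun nrm N u W <= Lam * (1 + nrm W - nrm (u + W)).
Proof.
move=> u1 Wu; have u0 := nrm1_neq0 u1.
have two0 : (2 : R) != 0 by rewrite pnatr_eq0.
have := @nrm_geom u (2^-1 *: (W - u)) u0.
have -> : u + 2 *: (2^-1 *: (W - u)) = W by rewrite scalerA divff // scale1r addrC subrK.
have -> : u + 2^-1 *: (W - u) = 2^-1 *: (u + W) by apply/rowP => i; rewrite !mxE; field.
rewrite nrmZ ?invr_ge0 ?ler0n // u1 hfunZ ?invr_ge0 ?ler0n //.
rewrite /hfun dotpDl dotp_self // u1 => /(_ ltac:(lra)); nra.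
Qed.

(* Since h(u, u + .) is convex and vanishes at 0, it suffices to treat |y| = r, where
   geometric convexity applies once. *)
Lemma mul_hfun_le_sigma (u y : V) (r tau : R) : u != 0 -> 0 < r -> r <= nrm u ->
  2 * r <= tau -> nrm y <= r -> Lam * r * hfun nrm N u (u + y) <= nrm y * sigmafun nrm N u tau.
Proof.
move=> u0 r0 ru rtau yr.
have [->|y0] := eqVneq y 0; first by rewrite addr0 hfun_self // nrm0 // mulr0 mul0r.
have y_gt0 := nrm_gt0 y0.
have Lam0 : 0 < Lam by apply: lt_trans Lam_gt2.
set lam := nrm y / r; set z := (r / nrm y) *: y.
have lam0 : 0 <= lam by rewrite divr_ge0 ?ltW.
have lam1 : 0 <= 1 - lam by rewrite subr_ge0 ler_pdivrMr // mul1r.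
have rlam : r * lam = nrm y by rewrite mulrC divfK // gt_eqF.
have nz : nrm z = r by rewrite nrmZ ?divr_ge0 ?ltW // divfK // gt_eqF.
have ey : u + y = lam *: (u + z) + (1 - lam) *: u.
  by rewrite /lam /z; apply/rowP => i; rewrite !mxE; field; rewrite !gt_eqF.
have conv : hfun nrm N u (u + y) <= lam * hfun nrm N u (u + z).
  by have := hfun_convex u (u + z) u lam0 lam1; rewrite -ey hfun_self // mulr0 addr0.
have geom : Lam * hfun nrm N u (u + z) <= sigmafun nrm N u tau.
  have zu : nrm z <= nrm u by rewrite nz.
  apply: le_trans (nrm_geom u0 zu) _.
  by apply: hfun_le_sigma => //; rewrite nrmZ ?ler0n // nz.
have Lr0 : 0 <= Lam * r by rewrite mulr_ge0 ?ltW.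
apply: le_trans (ler_wpM2l Lr0 conv) _.
rewrite -rlam; set hz := hfun nrm N u (u + z).
have -> : Lam * r * (lam * hz) = r * lam * (Lam * hz) by ring.
by apply: ler_wpM2l geom; apply: mulr_ge0 (ltW r0) lam0.
Qed.

Lemma mul_hfun_scaled_le_sigma (u w : V) (c r tau : R) : u != 0 -> 0 < c -> 0 < r ->
  r <= nrm u -> 2 * r <= tau -> nrm w <= c * r ->
  Lam * r * hfun nrm N u (c *: u + w) <= nrm w * sigmafun nrm N u tau.
Proof.
move=> u0 c0 r0 ru rtau wcr.
have ci0 : 0 <= c^-1 by rewrite invr_ge0 ltW.
have -> : c *: u + w = c *: (u + c^-1 *: w).
  by rewrite scalerDr scalerA divff ?gt_eqF // scale1r.
have wr : nrm (c^-1 *: w) <= r by rewrite nrmZ // ler_pdivrMl.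
have := mul_hfun_le_sigma u0 r0 ru rtau wr; rewrite nrmZ // => bound.
rewrite hfunZ; last exact: ltW.
have -> : Lam * r * (c * hfun nrm N u (u + c^-1 *: w)) =
  c * (Lam * r * hfun nrm N u (u + c^-1 *: w)) by ring.
by rewrite -ler_pdivlMl // mulrA.
Qed.

(* The triangle defect of u and W = k u + a is estimated by the subgradient
   inequalities at W in the directions u and - k u. *)
Lemma mul_hfun_le_triangle_defect (u a : V) (k : R) : nrm u = 1 -> 0 < k -> k <= 1 ->
  nrm a <= 1 + k -> k *: u + a != 0 ->
  k * ((Lam - 2) * hfun nrm N u (k *: u + a)) <= Lam * (nrm a + k - nrm (k *: u + a)).
Proof.
move=> u1 k0 k1 ak W0; set W := k *: u + a.
have Wu : nrm (W - u) <= 2.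
  have -> : W - u = a - (1 - k) *: u by rewrite /W; row_ring.
  by have := nrmB a ((1 - k) *: u); rewrite nrmZ ?subr_ge0 // u1; lra.
have defect := hfun_le_triangle_defect u1 Wu.
have := nrm_subgradient u W0; rewrite [W + u]addrC => along_u.
have := nrm_subgradient (- (k *: u)) W0.
rewrite (_ : W + - (k *: u) = a); last by rewrite /W addrC addKr.
rewrite dotpNl dotpZl => against_u.
set d := dotp u (N W) in along_u against_u.
have Lam0 : 0 < Lam by apply: lt_trans Lam_gt2.
have : k * ((Lam - 2) * hfun nrm N u W) <= k * (Lam * (1 - d)).
  rewrite ler_pM2l //; apply: le_trans defect _.
  by rewrite ler_pM2l //; lra.
suff : k * (Lam * (1 - d)) <= Lam * (nrm a + k - nrm W) by lra.
by rewrite mulrCA ler_pM2l //; lra.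
Qed.

(* e = l1 - l0, eb = bl1 - bl0 and w = q - p, in the notation of the header. *)
Section Configuration.
Variables (e eb w : V) (s t delta rho tau : R).
Local Notation a := (s *: e + w).
Local Notation b := ((1 - s) *: e - w).
Local Notation excess := (nrm a + nrm b - 1).
Local Notation m := (rho - 3 * delta).
Local Notation hsum :=
  (hfun nrm N eb ((1 - t) *: eb + a) + hfun nrm N eb (t *: eb + b)).
Hypotheses (e1 : nrm e = 1) (eb1 : nrm eb = 1) (t_ge0 : 0 <= t) (t_le1 : t <= 1).
Hypotheses (W1_ge1 : 1 <= nrm ((1 - t) *: eb + a)) (W2_ge1 : 1 <= nrm (t *: eb + b)).
Hypotheses (delta_gt0 : 0 < delta) (delta_lt : delta < 1 / 4) (rho_gt : 3 * delta < rho).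
Hypotheses (s_gt : rho - delta < s) (s_lt : rho - delta < 1 - s) (w_le : nrm w <= 2 * delta).
Hypotheses (tau_ge : 4 * delta <= tau * m)
  (sigma_le : sigmafun nrm N e tau <= sigmafun nrm N eb tau).

Lemma nrm_a_ge_t : t <= nrm a.
Proof.
have := le_trans W1_ge1 (nrmD _ _); rewrite nrmZ ?subr_ge0 // eb1.
by move: t_le1; lra.
Qed.

Lemma nrm_b_ge_1t : 1 - t <= nrm b.
Proof.
have := le_trans W2_ge1 (nrmD _ _); rewrite nrmZ // eb1.
by move: t_le1; lra.
Qed.

Lemma s_gt0 : 0 < s.
Proof. by move: s_gt rho_gt delta_gt0; lra. Qed.

Lemma s_lt1 : s < 1.
Proof. by move: s_lt rho_gt delta_gt0; lra. Qed.

Lemma m_gt0 : 0 < m.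
Proof. by move: rho_gt; lra. Qed.

Lemma m_le_t : m <= t.
Proof.
have := le_trans W2_ge1 (nrmD _ _); have := nrmB ((1 - s) *: e) w.
rewrite !nrmZ ?subr_ge0 ?(ltW s_lt1) // eb1 e1.
by move: s_gt w_le; lra.
Qed.

Lemma m_le_1t : m <= 1 - t.
Proof.
have := le_trans W1_ge1 (nrmD _ _); have := nrmD (s *: e) w.
rewrite !nrmZ ?subr_ge0 ?(ltW s_gt0) ?t_le1 // eb1 e1.
by move: s_lt w_le; lra.
Qed.

Lemma tau_gt0 : 0 < tau.
Proof. by rewrite -(pmulr_lgt0 _ m_gt0); move: tau_ge delta_gt0; lra. Qed.

Lemma excess_hfun : excess = hfun nrm N e a + hfun nrm N e b.
Proof.
have ab : a + b = e by row_ring.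
by have := dotp_self (nrm1_neq0 e1); rewrite -{1}ab dotpDl e1 /hfun; lra.
Qed.

Lemma excess_mul_le_sigma (r : R) : 0 < r -> r <= 1 -> 2 * r <= tau ->
  nrm w <= s * r -> nrm w <= (1 - s) * r ->
  Lam * r * excess <= 2 * nrm w * sigmafun nrm N e tau.
Proof.
move=> r0 r1 rtau wa wb; have e0 := nrm1_neq0 e1.
have re : r <= nrm e by rewrite e1.
have ha := mul_hfun_scaled_le_sigma e0 s_gt0 r0 re rtau wa.
have hb := @mul_hfun_scaled_le_sigma e (- w) (1 - s) r tau e0.
move: hb; rewrite nrmN subr_gt0 => /(_ s_lt1 r0 re rtau wb) hb.
by rewrite excess_hfun; lra.
Qed.

Lemma sigma_e_ge0 : 0 <= sigmafun nrm N e tau.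
Proof. exact: sigma_ge0 (nrm1_neq0 e1) (ltW tau_gt0). Qed.

Lemma excess_le_small_tau : tau <= 2 -> Lam * excess <= 2 * m * sigmafun nrm N e tau.
Proof.
move=> tau2; have tau0 := tau_gt0; have m0 := m_gt0.
have w_tau : 2 * nrm w <= tau * m by move: w_le tau_ge; lra.
have w_le_r (c : R) : m <= c -> nrm w <= c * (tau / 2).
  move=> mc; have : tau * m <= tau * c by rewrite ler_pM2l.
  by move: w_tau; lra.
have ms : m <= s by move: s_gt delta_gt0; lra.
have m1s : m <= 1 - s by move: s_lt delta_gt0; lra.
have := excess_mul_le_sigma (_ : 0 < tau / 2) _ _ (w_le_r _ ms) (w_le_r _ m1s).
have S0 := sigma_e_ge0.
move=> /(_ ltac:(lra) ltac:(lra) ltac:(lra)) bound.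
have : Lam * excess * tau <= (2 * m * sigmafun nrm N e tau) * tau.
  have := ler_wpM2r S0 w_tau; lra.
by rewrite ler_pM2r.
Qed.

Lemma excess_le_sigma : Lam * excess <= sigmafun nrm N e tau.
Proof.
have S0 := sigma_e_ge0.
have [tau2|tau2] := lerP tau 2.
  have m_half : 2 * m <= 1 by move: m_le_t m_le_1t; lra.
  by have := ler_wpM2r S0 m_half; have := excess_le_small_tau tau2; lra.
have ws : nrm w <= s * 1 by rewrite mulr1; move: w_le s_gt rho_gt; lra.
have w1s : nrm w <= (1 - s) * 1 by rewrite mulr1; move: w_le s_lt rho_gt; lra.
have tau2' : 2 * 1 <= tau by rewrite mulr1 ltW.
have := excess_mul_le_sigma ltr01 (lexx 1) tau2' ws w1s; rewrite mulr1.
have w_small : 2 * nrm w <= 1 by move: w_le delta_lt; lra.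
by have := ler_wpM2r S0 w_small; lra.
Qed.

Lemma hsum_le : hsum <= excess + hfun nrm N eb e.
Proof.
have W12 : (1 - t) *: eb + a + (t *: eb + b) = eb + e by row_ring.
have dW : dotp ((1 - t) *: eb + a) (N eb) + dotp (t *: eb + b) (N eb)
    = 1 + dotp e (N eb).
  by rewrite -dotpDl W12 dotpDl dotp_self ?eb1 // nrm1_neq0.
have := lerD (nrmD ((1 - t) *: eb) a) (nrmD (t *: eb) b).
rewrite !nrmZ ?subr_ge0 // eb1 /hfun e1.
by move: dW; lra.
Qed.

Lemma hsum_mul_le_excess : excess <= 2 * m -> m * ((Lam - 2) * hsum) <= Lam * excess.
Proof.
move=> small; have eb0 := nrm1_neq0 eb1.
have ta := nrm_a_ge_t; have tb := nrm_b_ge_1t.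
have mt := m_le_t; have m1t := m_le_1t; have m0 := m_gt0.
have a_le : nrm a <= 1 + (1 - t) by lra.
have b_le : nrm b <= 1 + t by lra.
have W1_0 : (1 - t) *: eb + a != 0.
  by apply/eqP => W0; move: W1_ge1; rewrite W0 nrm0 ler10.
have W2_0 : t *: eb + b != 0.
  by apply/eqP => W0; move: W2_ge1; rewrite W0 nrm0 ler10.
have := mul_hfun_le_triangle_defect eb1 (_ : 0 < 1 - t) (_ : 1 - t <= 1) a_le W1_0.
have := mul_hfun_le_triangle_defect eb1 (_ : 0 < t) t_le1 b_le W2_0.
move=> /(_ ltac:(lra)) h2 /(_ ltac:(lra) ltac:(lra)) h1.
have L2 : 0 <= Lam - 2 by move: Lam_gt2; lra.
have g1 := mulr_ge0 L2 (hfun_ge0 ((1 - t) *: eb + a) eb0).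
have g2 := mulr_ge0 L2 (hfun_ge0 (t *: eb + b) eb0).
have := ler_wpM2r g1 m1t; have := ler_wpM2r g2 mt.
have L0 : 0 <= Lam by move: Lam_gt2; lra.
have := ler_wpM2l L0 W1_ge1; have := ler_wpM2l L0 W2_ge1.
by move: h1 h2; lra.
Qed.

Lemma configuration_bound : (Lam - 2) * hsum <= Lam * sigmafun nrm N eb tau.
Proof.
have eb0 := nrm1_neq0 eb1.
have Sb0 := sigma_ge0 eb0 (ltW tau_gt0); have Se0 := sigma_e_ge0.
have L2 : 0 < Lam - 2 by move: Lam_gt2; lra.
have hsum_bound := ler_wpM2l (ltW L2) hsum_le.
have excess_ge0 : 0 <= excess by have := nrm_a_ge_t; have := nrm_b_ge_1t; lra.
have Lexcess := excess_le_sigma.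
have [tau2|tau2] := lerP 2 tau.
  have he : hfun nrm N eb e <= sigmafun nrm N eb tau.
    have := @hfun_le_sigma eb (e - eb) tau eb0; rewrite [eb + _]addrC subrK; apply.
    by have := nrmB e eb; rewrite e1 eb1; lra.
  have := ler_wpM2l (ltW L2) he.
  by move: Lam_gt2 sigma_le; nra.
have he : hfun nrm N eb e <= 2 by have := hfun_le e eb0; rewrite e1 mulr1.
have [SeL|SeL] := lerP (sigmafun nrm N e tau) Lam.
  have Lm := excess_le_small_tau (ltW tau2).
  have small : excess <= 2 * m.
    rewrite -(ler_pM2l (lt_trans _ Lam_gt2 : 0 < Lam)) //.
    have := ler_wpM2l (ltW m_gt0) SeL; lra.
  have bound := hsum_mul_le_excess small.
  have : (Lam - 2) * hsum <= 2 * sigmafun nrm N e tau.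
    rewrite -(ler_pM2l m_gt0); lra.
  by move: Lam_gt2 sigma_le Sb0; nra.
have := ler_wpM2l (ltW L2) he.
by move: Lam_gt2 sigma_le; nra.
Qed.

End Configuration.

End Norm.

Unset Implicit Arguments.

Theorem theorem5p1 (R : realType) (n : nat) (nrm : 'rV[R]_n -> R)
  (N : 'rV[R]_n -> 'rV[R]_n) (Lam : R)
  (l0 l1 bl0 bl1 x0 : 'rV[R]_n) (delta rho kappa : R) :
  is_norm nrm -> strictly_convex_norm nrm -> C1_with_gradient nrm N ->
  2 < Lam -> geom_convex nrm N Lam ->
  nrm (l1 - bl0) >= nrm (l1 - l0) ->
  nrm (bl1 - l0) >= nrm (bl1 - bl0) ->
  nrm (l1 - l0) = 1 -> nrm (bl1 - bl0) = 1 ->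
  0 < delta < 1 / 4 ->
  seg_meets_ball nrm l0 l1 x0 delta ->
  seg_meets_ball nrm bl0 bl1 x0 delta ->
  3 * delta < rho ->
  rho < nrm (l1 - x0) -> rho < nrm (l0 - x0) ->
  4 / (rho - 3 * delta) <= kappa ->
  sigmafun nrm N (l1 - l0) (kappa * delta) <=
    sigmafun nrm N (bl1 - bl0) (kappa * delta) ->
  hfun nrm N (bl1 - bl0) (bl1 - l0) + hfun nrm N (bl1 - bl0) (l1 - bl0)
    <= Lam / (Lam - 2) * sigmafun nrm N (bl1 - bl0) (kappa * delta).
Proof.
move=> nrm_norm _ nrm_C1 Lam_gt2 nrm_geom W2_ge W1_ge e1 eb1 /andP[delta_gt0 delta_lt]
  [s /andP[s0 s1] p_near] [t /andP[t0 t1] q_near] rho_gt l1_far l0_far kappa_ge sigma_le.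
set e := l1 - l0 in W2_ge e1 sigma_le *; set eb := bl1 - bl0 in W1_ge eb1 sigma_le *.
rewrite e1 in W2_ge; rewrite eb1 in W1_ge.
set p := (1 - s) *: l0 + s *: l1 in p_near; set q := (1 - t) *: bl0 + t *: bl1 in q_near.
set w := q - p.
rewrite (_ : bl1 - l0 = (1 - t) *: eb + (s *: e + w)) in W1_ge *; last by row_ring.
rewrite (_ : l1 - bl0 = t *: eb + ((1 - s) *: e - w)) in W2_ge *; last by row_ring.
rewrite (_ : l0 - x0 = - (s *: e) + (p - x0)) in l0_far; last by row_ring.
rewrite (_ : l1 - x0 = (1 - s) *: e + (p - x0)) in l1_far; last by row_ring.
have s_gt := nrm_gtB nrm_norm l0_far p_near.
have s_lt := nrm_gtB nrm_norm l1_far p_near.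
rewrite nrmN // nrmZ // e1 mulr1 in s_gt; rewrite nrmZ ?subr_ge0 // e1 mulr1 in s_lt.
have w_le : nrm w <= 2 * delta.
  rewrite (_ : w = (q - x0) - (p - x0)); last by row_ring.
  by apply: le_trans (nrmB nrm_norm _ _) _; lra.
have tau_ge : 4 * delta <= kappa * delta * (rho - 3 * delta).
  rewrite mulrAC ler_pM2r // -ler_pdivrMr //; lra.
rewrite mulrAC ler_pdivlMr ?subr_gt0 // mulrC.
exact: (configuration_bound nrm_norm nrm_C1 Lam_gt2 nrm_geom e1 eb1 t0 t1 W1_ge W2_ge
  delta_gt0 delta_lt rho_gt s_gt s_lt w_le tau_ge sigma_le).
Qed.
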